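(* Let $p,n$ be positive integers with $c=\gcd(p,n)$ prime, let $d=n/c$ and $y\in\mathbb{Z}_n$. Let $G\cong K_{c-1,d}$ and $H\cong K_{1,n}$ with disjoint vertex sets. Then $\mathcal{Q}_{(\mathbb{Z}_n,y,y)}(\widetilde{\mathcal{T}(p,2)})\cong G\,\overrightarrow{\triangledown_d}\,H$. Explicitly, the trivial coloring carries $n$ loops and has no outgoing arcs to other vertices, and for each nontrivial coloring $\alpha$ and each coloring $\beta$ (trivial or not) there are exactly $d$ arcs from $\alpha$ to $\beta$.
   Context: $\mathbb{Z}_n$ is the dihedral quandle ($x\triangleright y=2y-x$ mod $n$) and $(\mathbb{Z}_n,y,y)$ the $2$-pointed quandle with both basepoints $y$. $P(\widetilde{\mathcal{T}(p,2)})=(Q,x_1,x_{p+1})$ with $Q=\langle x_1,\dots,x_{p+1}\mid x_p=x_2\triangleright x_{p+1},\ x_i=x_{i+2}\triangleright x_{i+1}\ (1\le i\le p-1)\rangle$, the fundamental pointed quandle of the $1$-linkoid of $(p,2)$-torus type. For a pointed quandle $\mathcal{X}$, the full pointed quandle coloring quiver $\mathcal{Q}_{\mathcal{X}}(L)$ is the directed multigraph with vertex set $\hom(P(L),\mathcal{X})$ (basepoint-preserving homomorphisms) and $|\{\varphi\in\operatorname{End}(\mathcal{X}):\varphi\circ\alpha=\beta\}|$ arcs from $\alpha$ to $\beta$, with $\operatorname{End}(\mathcal{X})$ the pointed endomorphisms. A directed multigraph is a pair $(V,w)$, $w:V\times V\to\mathbb{Z}_{\ge0}$ counting arcs. $K_{m,k}$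 is the directed multigraph on $\{1,\dots,m\}$ with $w(u,v)=k$ for all $u,v$ (loops included). For directed multigraphs $G=(V(G),w_G)$, $H=(V(H),w_H)$ with disjoint vertex sets, the $k$-directed join $G\,\overrightarrow{\triangledown_k}\,H$ has vertex set $V(G)\cup V(H)$ and $w(u,v)=w_G(u,v)$ if $u,v\in V(G)$, $w_H(u,v)$ if $u,v\in V(H)$, $k$ if $u\in V(G),v\in V(H)$, and $0$ if $u\in V(H),v\in V(G)$. *)

From HB Require Import structures.
From mathcomp Require Import all_boot all_order all_algebra.
Set Implicit Arguments. Unset Strict Implicit. Unset Printing Implicit Defensive.
Import GRing.Theory.
Local Open Scope ring_scope.

Definition dih (n : nat) (x y : 'Z_n) : 'Z_n := y *+ 2 - x.

(* Colorings = basepoint-preserving homomorphisms P(T~(p,2)) -> (Z_n, y, y).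
   By the universal property of the presented quandle Q, such a homomorphism
   is the same as an assignment of the generators x_1..x_{p+1} satisfying the
   defining relations.  Generator x_k is stored at index k-1 of 'I_(p+1). *)
Definition gen (n p : nat) (a : {ffun 'I_p.+1 -> 'Z_n}) (k : nat) : 'Z_n :=
  a (inord k.-1).

Definition is_coloring (n p : nat) (y : 'Z_n) (a : {ffun 'I_p.+1 -> 'Z_n}) : bool :=
  [&& gen a p == dih (gen a 2) (gen a p.+1),
      [forall i : 'I_p.+1,
         ((1 <= i)%N && (i <= p - 1)%N) ==>
           (gen a i == dih (gen a (i + 2)%N) (gen a (i + 1)%N))],
      gen a 1 == y & gen a p.+1 == y].

Definition coloring (n p : nat) (y : 'Z_n) : finType :=
  {a : {ffun 'I_p.+1 -> 'Z_n} | is_coloring y a}.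

Definition is_pend (n : nat) (y : 'Z_n) (f : {ffun 'Z_n -> 'Z_n}) : bool :=
  [forall a, forall b, f (dih a b) == dih (f a) (f b)] && (f y == y).

Definition quiver_w (n p : nat) (y : 'Z_n) (al be : coloring p y) : nat :=
  #|[set f : {ffun 'Z_n -> 'Z_n} |
      is_pend y f && ([ffun k => f (val al k)] == val be)]|.

Record dmg := DMG { dmg_V : finType; dmg_w : dmg_V -> dmg_V -> nat }.

Definition dmg_iso (G H : dmg) : Prop :=
  exists f : dmg_V G -> dmg_V H,
    bijective f /\ forall u v, @dmg_w H (f u) (f v) = @dmg_w G u v.

Definition quiver (n p : nat) (y : 'Z_n) : dmg := @DMG (coloring p y) (@quiver_w n p y).

(* K_{m,k}: m vertices, k arcs between every ordered pair (loops included). *)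
Definition Kmk (m k : nat) : dmg := @DMG 'I_m (fun _ _ => k).

Definition djoin_w (k : nat) (G H : dmg) (u v : (dmg_V G + dmg_V H)%type) : nat :=
  match u, v with
  | inl u', inl v' => @dmg_w G u' v'
  | inr u', inr v' => @dmg_w H u' v'
  | inl _, inr _ => k
  | inr _, inl _ => 0%N
  end.

Definition djoin (k : nat) (G H : dmg) : dmg :=
  @DMG (dmg_V G + dmg_V H)%type (@djoin_w k G H).

From mathcomp Require Import all_boot all_order all_algebra.
From mathcomp Require Import perm zify ring.
Set Implicit Arguments. Unset Strict Implicit. Unset Printing Implicit Defensive.
Import GRing.Theory.

(* The crossing relations force a coloring with both endpoints y to be an arithmetic
   progression x_k = y + (k - 1) t, and closing up at x_(p+1) = y means p t = 0; so the
   colorings correspond to the c = gcd(p, n) elements of the annihilator d Z_n of p.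
   The pointed endomorphisms of (Z_n, y, y) are the affine maps x |-> y + u (x - y), so
   the arcs from the coloring of step t to that of step s are the solutions u of u t = s.
   For t = 0 there are n or none; for t = j d with 0 < j < c, j is invertible modulo the
   prime c and there are exactly d. *)

Lemma card_eq_bij_pointed (A B : finType) (a0 : A) (b0 : B) : #|A| = #|B| ->
  exists f : A -> B, bijective f /\ f a0 = b0.
Proof.
move=> AB; pose h x : B := enum_val (cast_ord AB (enum_rank x)).
have h_inj : injective h by move=> x1 x2 /enum_val_inj/cast_ord_inj/enum_rank_inj.
exists (tperm (h a0) b0 \o h); split; last by rewrite /= tpermL.
by apply: inj_card_bij; [exact: inj_comp perm_inj h_inj | rewrite AB].
Qed.

Lemma djoin_Kmk_iso (G : dmg) (v0 : dmg_V G) (k n : nat) :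
  (forall u v, dmg_w u v = if u == v0 then (if v == v0 then n else 0) else k) ->
  dmg_iso G (djoin k (Kmk #|dmg_V G|.-1 k) (Kmk 1 n)).
Proof.
move=> wG.
have cardV : #|dmg_V G| = #|{: 'I_#|dmg_V G|.-1 + 'I_1}|.
  by rewrite card_sum !card_ord addn1 prednK //; apply/card_gt0P; exists v0.
have [f [f_bij f_v0]] := card_eq_bij_pointed v0 (inr ord0) cardV.
have f_eq u : (u == v0) = (f u == inr ord0) by rewrite -f_v0 (bij_eq f_bij).
exists f; split=> // u v; rewrite wG !f_eq.
by case: (f u) => [u'|u']; case: (f v) => [v'|v'] //=; rewrite ?(ord1 u') ?(ord1 v').
Qed.

Lemma card_ord_modn_eq N a b r : (0 < a)%N -> N = (a * b)%N -> (r < a)%N ->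
  #|[set u : 'I_N | u %% a == r]| = b.
Proof.
move=> a_gt0 Nab ra.
have gP (k : 'I_b) : (r + a * k < N)%N by rewrite Nab; have := ltn_ord k; nia.
pose g (k : 'I_b) : 'I_N := Ordinal (gP k).
have g_inj : injective g by move=> k1 k2 /(congr1 val) /= E; apply: val_inj => /=; nia.
suff -> : [set u : 'I_N | u %% a == r] = g @: setT by rewrite card_imset // cardsT card_ord.
apply/setP => u; rewrite inE; apply/eqP/imsetP => [ur | [k _ ->] /=].
  have ub : (u %/ a < b)%N by rewrite ltn_divLR // mulnC -Nab.
  exists (Ordinal ub) => //; apply: val_inj => /=.
  by rewrite {1}(divn_eq u a) ur addnC mulnC.
by rewrite addnC mulnC modnMDl modn_small.
Qed.

Lemma coprime_modn_inv c j : (0 < j)%N -> coprime j c -> exists j', (j' * j = 1 %[mod c])%N.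
Proof.
move=> j_gt0 /eqnP cop; have [km kn E _] := egcdnP c j_gt0.
by exists km; rewrite E cop modnMDl.
Qed.

Lemma modn_mul_unit_eq c j j' u i : (j' * j = 1 %[mod c])%N ->
  (u * j == i %[mod c])%N = (u == i * j' %[mod c])%N.
Proof.
move=> jj'; apply/eqP/eqP => E.
  by rewrite -[u]muln1 -modnMmr -jj' modnMmr mulnA mulnAC -modnMml E modnMml.
by rewrite -modnMml E modnMml -mulnA -modnMmr jj' modnMmr muln1.
Qed.

Lemma card_ord_mulmod_eq N c d j i : (0 < j)%N -> coprime j c -> (0 < d)%N ->
  N = (c * d)%N -> (i < c)%N ->
  #|[set u : 'I_N | (u * (j * d)) %% N == i * d]%N| = d.
Proof.
move=> j_gt0 cop d_gt0 Ncd ic; have c_gt0 : (0 < c)%N by case: (c) ic.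
have [j' jj'] := coprime_modn_inv j_gt0 cop.
have mulmodE x : ((x * (j * d)) %% N = (x * j %% c) * d)%N.
  by rewrite Ncd mulnA muln_modl.
transitivity #|[set u : 'I_N | u %% c == i * j' %% c]|.
  apply: eq_card => u; rewrite !inE mulmodE eqn_pmul2r //.
  by rewrite -{1}(modn_small ic) (modn_mul_unit_eq _ _ jj').
by apply: card_ord_modn_eq; rewrite ?ltn_mod.
Qed.

Lemma coprime_div_gcdn m n : (0 < gcdn m n)%N ->
  coprime (m %/ gcdn m n) (n %/ gcdn m n).
Proof.
move=> g_gt0; rewrite /coprime -(eqn_pmul2r g_gt0) mul1n muln_gcdl.
by rewrite !divnK ?dvdn_gcdl ?dvdn_gcdr.
Qed.

Lemma dvdn_mul_gcd p n t : (0 < n)%N -> (n %| p * t)%N = (n %/ gcdn p n %| t)%N.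
Proof.
move=> n_gt0; have g_gt0 : (0 < gcdn p n)%N by rewrite gcdn_gt0 n_gt0 orbT.
rewrite -[p in p * t](divnK (dvdn_gcdl p n)) -[n in n %| _](divnK (dvdn_gcdr p n)).
by rewrite mulnAC dvdn_pmul2r // Gauss_dvdr // coprime_sym coprime_div_gcdn.
Qed.

Local Open Scope ring_scope.

Lemma arith_progression (V : zmodType) (s : nat -> V) N :
  (forall k, (k.+2 <= N)%N -> s k.+2 = s k.+1 *+ 2 - s k) ->
  forall k, (k <= N)%N -> s k = s 0%N + (s 1%N - s 0%N) *+ k.
Proof.
move=> rec.
have step k : (k < N)%N -> s k.+1 - s k = s 1%N - s 0%N.
  elim: k => // k IH kN.
  by rewrite (rec k) // -(IH (ltnW kN)) mulr2n addrAC addrK.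
elim=> [|k IH] kN; first by rewrite mulr0n addr0.
by rewrite -(subrK (s k) (s k.+1)) (step k kN) (IH (ltnW kN)) mulrS addrCA.
Qed.

(* 'Z_n is the ring Z/nZ only for n >= 2, hence n := m.+2 below. *)
Section ZpCounting.
Variable m : nat.
Local Notation n := m.+2.

Lemma Zp_mulrn_eq0 (t : 'Z_n) k : (t *+ k == 0) = (n %/ gcdn k n %| t)%N.
Proof.
rewrite -mulr_natl -val_eqE /= (val_Zp_nat (p := n)) // modnMml.
by rewrite -dvdn_mul_gcd.
Qed.

Lemma card_Zp_mulrn_eq0 k : #|[set t : 'Z_n | t *+ k == 0]| = gcdn k n.
Proof.
have g_gt0 : (0 < gcdn k n)%N by rewrite gcdn_gt0 orbT.
have d_gt0 : (0 < n %/ gcdn k n)%N by rewrite divn_gt0 // dvdn_leq ?dvdn_gcdr.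
transitivity #|[set t : 'I_n | t %% (n %/ gcdn k n) == 0]%N|.
  by apply: eq_card => t; rewrite !inE Zp_mulrn_eq0.
by apply: card_ord_modn_eq; rewrite // divnK ?dvdn_gcdr.
Qed.

Lemma card_Zp_mul_eq k (t s : 'Z_n) : prime (gcdn k n) ->
  t *+ k = 0 -> s *+ k = 0 -> t != 0 ->
  #|[set u : 'Z_n | u * t == s]| = (n %/ gcdn k n)%N.
Proof.
move=> c_prime /eqP; rewrite Zp_mulrn_eq0 => dt /eqP; rewrite Zp_mulrn_eq0 => ds t_neq0.
set c := gcdn k n in c_prime dt ds *; set d := (n %/ c)%N in dt ds *.
have n_cd : n = (c * d)%N by rewrite mulnC divnK ?dvdn_gcdr.
have d_gt0 : (0 < d)%N by move: n_cd; case: (d) => //; rewrite muln0.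
have t_gt0 : (0 < t)%N by rewrite lt0n; apply: contra t_neq0 => /eqP t0; apply/eqP/val_inj.
have j_gt0 : (0 < t %/ d)%N by rewrite divn_gt0 // dvdn_leq.
have jc : (t %/ d < c)%N by rewrite ltn_divLR // -n_cd.
have ic : (s %/ d < c)%N by rewrite ltn_divLR // -n_cd.
have cop : coprime (t %/ d) c.
  by rewrite coprime_sym prime_coprime //; apply/negP => /(dvdn_leq j_gt0); rewrite leqNgt jc.
by rewrite -(card_ord_mulmod_eq j_gt0 cop d_gt0 n_cd ic) !divnK.
Qed.

End ZpCounting.

Section PointedEndomorphisms.
Variables (m : nat) (y : 'Z_m.+2).
Local Notation n := m.+2.

Definition dih_aff (u : 'Z_n) : {ffun 'Z_n -> 'Z_n} := [ffun x => y + u * (x - y)].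

Lemma dih_aff_pend u : is_pend y (dih_aff u).
Proof.
apply/andP; split; last by rewrite ffunE subrr mulr0 addr0.
by apply/forallP => a; apply/forallP => b; apply/eqP; rewrite /dih !ffunE !mulr2n; ring.
Qed.

Lemma dih_aff_inj : injective dih_aff.
Proof.
by move=> u v /ffunP /(_ (y + 1)); rewrite !ffunE [y + 1]addrC addrK !mulr1 => /addrI.
Qed.

Lemma pendE f : is_pend y f -> f = dih_aff (f (y + 1) - y).
Proof.
case/andP => /forallP f_hom /eqP fy.
have f_nat k : f (y + 1 *+ k) = y + (f (y + 1) - y) *+ k.
  pose s i := f (y + 1 *+ i).
  rewrite -/(s k) (@arith_progression _ s k) /s ?addr0 ?fy //.
  move=> i _; have /forallP/(_ (y + 1 *+ i.+1))/eqP := f_hom (y + 1 *+ i).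
  by rewrite /dih => <-; apply: congr1; ring.
apply/ffunP => x; rewrite ffunE -{1}(addrNK y x) addrC -[x - y]natr_Zp.
by rewrite f_nat mulr_natr.
Qed.
End PointedEndomorphisms.

Section Colorings.
Variables (m p : nat) (y : 'Z_m.+2).
Local Notation n := m.+2.
Hypothesis p_gt0 : (0 < p)%N.

Definition arith_col (t : 'Z_n) : {ffun 'I_p.+1 -> 'Z_n} := [ffun k : 'I_p.+1 => y + t *+ k].

Lemma arith_col_coloring t : t *+ p = 0 -> is_coloring y (arith_col t).
Proof.
move=> pt; have colE k : (k <= p)%N -> arith_col t (inord k) = y + t *+ k.
  by move=> kp; rewrite ffunE inordK.
rewrite /is_coloring /gen /dih /= !colE ?leq_pred // pt addr0 eqxx !andbT.
apply/andP; split.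
  case: p p_gt0 pt => // q _; rewrite mulrSr => /eqP; rewrite addr_eq0 => /eqP /= ->.
  by apply/eqP; ring.
apply/forallP => i; apply/implyP => /andP [i_ge1 i_le].
rewrite !colE; try lia.
by case: (nat_of_ord i) i_ge1 => // j _; rewrite addn1 addn2 /=; apply/eqP; ring.
Qed.

Lemma coloring_arith a : is_coloring y a -> a = arith_col (a (inord 1) - y).
Proof.
case/and4P => _ /forallP rel /eqP a0 _; rewrite /gen /= in a0.
have rec k : (k.+2 <= p)%N -> a (inord k.+2) = a (inord k.+1) *+ 2 - a (inord k).
  move=> k2p; have /implyP := rel (inord k.+1).
  rewrite /gen /dih inordK; last by lia.
  have kp : (k < p - 1)%N by lia.
  by rewrite addn1 addn2 /= => /(_ kp)/eqP ->; rewrite subKr.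
apply/ffunP => i; rewrite ffunE.
have := @arith_progression _ (fun k => a (inord k)) p rec i (leq_ord i).
by rewrite /= inord_val a0.
Qed.

Definition col_step (a : coloring p y) : 'Z_n := val a (inord 1) - y.

Lemma coloringE (a : coloring p y) : val a = arith_col (col_step a).
Proof. exact: coloring_arith (valP a). Qed.

Lemma coloring1 (a : coloring p y) : val a (inord 1) = y + col_step a.
Proof. by rewrite addrC subrK. Qed.

Lemma col_step_inj : injective col_step.
Proof. by move=> a b ab; apply: val_inj; rewrite !coloringE ab. Qed.

Lemma col_step_ann (a : coloring p y) : col_step a *+ p = 0.
Proof.
have /and4P [_ _ _ /eqP] := valP a.
rewrite /gen /= coloringE ffunE inordK // => colp.
by rewrite -(addKr y (col_step a *+ p)) colp addNr.
Qed.

Lemma col_step_arith_col t (pt : t *+ p = 0) :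
  col_step (Sub (arith_col t) (arith_col_coloring pt)) = t.
Proof. by rewrite /col_step /= ffunE inordK // addrC addKr. Qed.

Definition trivial_col : coloring p y := Sub (arith_col 0) (arith_col_coloring (mul0rn _ p)).

Lemma col_step_eq0 (a : coloring p y) : (col_step a == 0) = (a == trivial_col).
Proof. by rewrite -(inj_eq col_step_inj) col_step_arith_col. Qed.

Lemma trivial_coloringE (a : coloring p y) : [forall k, val a k == y] = (a == trivial_col).
Proof.
rewrite -col_step_eq0 coloringE; apply/forallP/eqP => [/(_ (inord 1)) | t0 k].
  by rewrite ffunE inordK // mulr1n => /eqP colp; rewrite -(addKr y (col_step a)) colp addNr.
by rewrite ffunE t0 mul0rn addr0.
Qed.

Lemma card_coloring : #|coloring p y| = gcdn p n.
Proof.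
rewrite -card_Zp_mulrn_eq0 -[LHS]cardsT -(card_imset _ col_step_inj).
apply: eq_card => t; rewrite inE; apply/imsetP/eqP => [[a _ ->] | pt].
  exact: col_step_ann.
by exists (Sub (arith_col t) (arith_col_coloring pt)); rewrite ?col_step_arith_col.
Qed.

Lemma quiver_wE (al be : coloring p y) :
  quiver_w al be = #|[set u : 'Z_n | u * col_step al == col_step be]|.
Proof.
rewrite /quiver_w -(card_imset _ (@dih_aff_inj m y)); apply: eq_card => f.
rewrite !inE; apply/andP/imsetP => [[f_pend /eqP fal] | [u /[!inE] /eqP ube ->]].
  exists (f (y + 1) - y); last exact: pendE.
  move/ffunP: fal => /(_ (inord 1)); rewrite inE ffunE !coloring1 {1}(pendE f_pend) ffunE.
  by rewrite [y + _ - y]addrC addKr => /(addrI y) ->.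
split; first exact: dih_aff_pend.
by apply/eqP/ffunP => k; rewrite !ffunE !coloringE !ffunE -ube; ring.
Qed.

Lemma quiver_w_trivial (al be : coloring p y) : prime (gcdn p n) ->
  quiver_w al be =
    if al == trivial_col then (if be == trivial_col then n else 0%N) else (n %/ gcdn p n)%N.
Proof.
move=> c_prime; rewrite quiver_wE -!col_step_eq0.
have [al0 | al_neq0] := eqVneq (col_step al) 0.
  2: exact: card_Zp_mul_eq (col_step_ann _) (col_step_ann _) al_neq0.
rewrite al0; have [-> | be_neq0] := eqVneq (col_step be) 0.
  by rewrite -[RHS]card_ord; apply: eq_card => u; rewrite !inE mulr0 eqxx.
rewrite -(cards0 'Z_n); apply: eq_card => u.
by rewrite !inE mulr0 eq_sym (negbTE be_neq0).
Qed.
End Colorings.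

Theorem theorem6p15 (p n : nat) (y : 'Z_n) :
  (0 < p)%N -> (0 < n)%N -> prime (gcdn p n) ->
  let c := gcdn p n in
  let d := (n %/ c)%N in
  dmg_iso (quiver p y) (djoin d (Kmk c.-1 d) (Kmk 1 n)) /\
  (forall al be : coloring p y,
     if [forall k, val al k == y]
     then quiver_w al be = (if al == be then n else 0%N)
     else quiver_w al be = d).
Proof.
case: n y => [|[|m]] y p_gt0 // _ c_prime c d; first by rewrite gcdn1 in c_prime.
split.
  have := @djoin_Kmk_iso (quiver p y) (trivial_col y p_gt0) d m.+2.
  by rewrite (card_coloring y p_gt0); apply=> al be; apply: quiver_w_trivial.
move=> al be; rewrite trivial_coloringE quiver_w_trivial //.
by case: eqVneq => [-> | //]; rewrite eq_sym.
Qed.
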